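(* Assume the well-posedness, controllability, common optimal equilibrium and strict stochastic dissipativity assumptions below, and suppose moreover that there is $\gamma>0$ with $\rho(x,i)\ge\gamma\|x-x_s\|^2$ for all $x\in\mathbb{R}^n$ and $i\in\mathcal{N}$. Then the EMPC-controlled system $x_{k+1}=f(x_k,\kappa_N(x_k,\theta_k),\theta_k)$ is mean square stable: $\mathbb{E}[\|x_k\|^2]\to0$ as $k\to\infty$ for all initial conditions $(x_0,\theta_0)$ in the feasibility domain $X_N$.
   Context: Setting: $\mathcal{N}=\{1,\dots,\nu\}$; $\{\theta_k\}$ a time-homogeneous Markov chain on $\mathcal{N}$ with transition matrix $P=(p_{ij})$ on a filtered probability space $(\Omega,\mathfrak{F},\{\mathfrak{F}_k\},\mathbb{P})$, $\mathfrak{F}_k$ generated by the history up to time $k$; system $x_{k+1}=f(x_k,u_k,\theta_k)$ with $x_k,\theta_k$ measured at time $k$; constraints $(x_k,u_k)\in Y_{\theta_k}$; stage cost $\ell$. $u\lhd\mathfrak{F}_k$ means $\mathfrak{F}_k$-measurable. Cover $\mathcal{C}(i)=\{j:p_{ij}>0\}$; bet node $\mathrm{bet}(i)\in\mathcal{C}(i)$ maximizing $p_{ij}$ over $j\in\mathcal{C}(i)$. Well-posedness: each $\ell(\cdot,\cdot,\theta)$ nonnegative, lower semicontinuous, level-bounded in $u$ locally uniformly in $x$; $f(\cdot,\cdot,\theta)$ continuous; $Y_\theta$ nonempty compact; chain irreducible and aperiodic. Optimal steady states $(x_s^\theta,u_s^\theta)$ minimize $\ell(x,u,\theta)$ s.t.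 $f(x,u,\theta)=x$, $(x,u)\in Y_\theta$. Controllability: for all $i,j$ there is $\bar u_s^{i,j}$ with $(x_s^i,\bar u_s^{i,j})\in Y_j$, $f(x_s^i,\bar u_s^{i,j},j)=x_s^{\mathrm{bet}(j)}$. Common optimal equilibrium: one optimal steady state $(x_s,u_s)=(0,0)$ common to all modes, with optimal steady-state cost $\ell_s$. Strict stochastic dissipativity: there are $\lambda:\mathbb{R}^n\times\mathcal{N}\to\mathbb{R}$, lower semicontinuous in the first argument, with $\lambda(x_s,\theta)=\lambda_s$ independent of $\theta$, and a convex $\rho:\mathbb{R}^n\times\mathcal{N}\to\mathbb{R}_+$ positive definite w.r.t. $x_s$, such that $\mathbb{E}[\lambda(x_{k+1},\theta_{k+1})-\lambda(x_k,\theta_k)\mid\mathfrak{F}_k]\le\ell(x_k,u_k,\theta_k)-\ell_s-\rho(x_k,\theta_k)$ for all states, inputs and modes, where $x_{k+1}=f(x_k,u_k,\theta_k)$. EMPC problem $\mathbb{P}(x,\theta)$: minimize $\mathbb{E}[\sum_{j=0}^{N-1}\ell(x_j,u_j,\theta_j)\mid\mathfrak{F}_0]$ subject to $x_{k+1}=f(x_k,u_k,\theta_k)$, $(x_k,u_k)\in Y_{\theta_k}$, $(x_0,\theta_0)=(x,\theta)$, $x_N=x_s^{\mathrm{bet}(\theta_{N-1})}$, $u_k\lhd\mathfrak{F}_k$; $X_N$ is its feasibility domain and $\kappa_N$ the first element of an optimal policy. *)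

From HB Require Import structures.
From mathcomp Require Import all_boot all_order all_algebra.
From mathcomp Require Import all_classical all_reals all_analysis.
Set Implicit Arguments. Unset Strict Implicit. Unset Printing Implicit Defensive.
Import Order.TTheory GRing.Theory Num.Theory.
Import numFieldNormedType.Exports.
Local Open Scope classical_set_scope.
Local Open Scope ring_scope.

Section EMPC.
Variables (R : realType) (n m nu : nat).
Notation state := 'rV[R]_n.
Notation input := 'rV[R]_m.
Notation mode := 'I_nu.

Definition sqnorm (x : state) : R := \sum_(j < n) (x 0 j) ^+ 2.

Definition stochastic (P : 'M[R]_nu) : Prop :=
  (forall i j, 0 <= P i j) /\ (forall i, \sum_(j < nu) P i j = 1).

Definition irreducible (P : 'M[R]_nu) : Prop :=
  forall i j : mode, exists k : nat, (0 < k)%N /\ 0 < (P ^+ k) i j.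

Definition aperiodic (P : 'M[R]_nu) : Prop :=
  forall (i : mode) (d : nat),
    (forall k : nat, (0 < k)%N -> 0 < (P ^+ k) i i -> (d %| k)%N) -> d = 1%N.

(* probability of the mode path a :: rest, conditional on theta_0 = a *)
Fixpoint pprob (P : 'M[R]_nu) (a : mode) (rest : seq mode) : R :=
  match rest with
  | [::] => 1
  | b :: r => P a b * pprob P b r
  end.

(* --- open-loop policies adapted to the mode history ----------------------
   A policy pi maps the history [:: theta_0; ...; theta_k] to u_k; this is
   exactly an F_k-measurable input sequence. *)
Definition policy := seq mode -> input.

Fixpoint run (f : state -> input -> mode -> state) (pi : policy)
    (past : seq mode) (x : state) (rest : seq mode) : state :=
  match rest with
  | [::] => x
  | th :: r => run f pi (rcons past th) (f x (pi (rcons past th)) th) r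
  end.

(* along the history h = theta0 :: t of length k+1: x_k, u_k, theta_k *)
Definition xk f pi (x0 : state) (th0 : mode) (t : seq mode) : state :=
  run f pi [::] x0 (belast th0 t).
Definition uk (pi : policy) (th0 : mode) (t : seq mode) : input := pi (th0 :: t).
Definition thk (th0 : mode) (t : seq mode) : mode := last th0 t.

(* feasibility for P(x, theta): constraints hold almost surely,
   terminal constraint x_N = x_s^{bet(theta_{N-1})} = 0 (common equilibrium) *)
Definition feasible (P : 'M[R]_nu) (f : state -> input -> mode -> state)
    (Y : mode -> set (state * input)) (N : nat) (pi : policy)
    (x : state) (th : mode) : Prop :=
  (forall (k : nat) (t : k.-tuple mode), (k < N)%N -> 0 < pprob P th t ->
      Y (thk th t) (xk f pi x th t, uk pi th t)) /\
  (forall t : N.-1.-tuple mode, 0 < pprob P th t ->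
      run f pi [::] x (th :: t) = 0).

Definition cost (P : 'M[R]_nu) (f : state -> input -> mode -> state)
    (l : state -> input -> mode -> R) (N : nat) (pi : policy)
    (x : state) (th : mode) : R :=
  \sum_(k < N) \sum_(t : k.-tuple mode)
     pprob P th t * l (xk f pi x th t) (uk pi th t) (thk th t).

Definition XN P f Y N (x : state) (th : mode) : Prop :=
  exists pi : policy, feasible P f Y N pi x th.

Definition optimal P f Y l N (pi : policy) (x : state) (th : mode) : Prop :=
  feasible P f Y N pi x th /\
  forall pi' : policy, feasible P f Y N pi' x th ->
    cost P f l N pi x th <= cost P f l N pi' x th.

Fixpoint clrun (f : state -> input -> mode -> state)
    (kappa : state -> mode -> input) (x : state) (rest : seq mode) : state :=
  match rest with
  | [::] => x
  | th :: r => clrun f kappa (f x (kappa x th) th) r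
  end.

Definition msq (P : 'M[R]_nu) f kappa (x0 : state) (th0 : mode) (k : nat) : R :=
  \sum_(t : k.-tuple mode) pprob P th0 t * sqnorm (clrun f kappa x0 (belast th0 t)).

Definition level_bounded_loc_unif (g : state -> input -> R) : Prop :=
  forall (xb : state) (a : R), exists2 V, nbhs xb V &
    exists M : R, forall x u, V x -> g x u <= a -> `|u| <= M.

Definition convex_state (g : state -> R) : Prop :=
  forall (x y : state) (t : R), 0 <= t <= 1 ->
    g (t *: x + (1 - t) *: y) <= t * g x + (1 - t) * g y.

End EMPC.

(* W := V_N + lambda, the optimal cost plus the storage function, is a
   stochastic Lyapunov function for the closed loop.  The optimal policy,
   shifted by one stage and completed by the steady-state input, is feasible
   from every successor state; its cost together with dissipativity gives
   E[W(x_{k+1}, theta_{k+1}) | F_k] <= W(x_k, theta_k) - rho(x_k, theta_k).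
   Summing dissipativity along any feasible policy bounds W below by
   N l_s + lambda_s, so sum_k E[rho(x_k, theta_k)] is finite; since
   rho >= gamma ||x||^2, so is sum_k E||x_k||^2, whose terms thus tend to 0. *)

From HB Require Import structures.
From mathcomp Require Import all_boot all_order all_algebra.
From mathcomp Require Import all_classical all_reals all_analysis.
From mathcomp Require Import lra zify.
Set Implicit Arguments.
Unset Strict Implicit.
Import Order.TTheory GRing.Theory Num.Theory.
Import numFieldNormedType.Exports.
Local Open Scope classical_set_scope.
Local Open Scope ring_scope.

Lemma cvg0_bounded_series (R : realType) (a : R ^nat) (C : R) :
  (forall k, 0 <= a k) -> (forall K, \sum_(k < K) a k <= C) -> a @ \oo --> 0.
Proof.
move=> a_ge0 aC; apply: cvg_series_cvg_0; apply: nondecreasing_is_cvgn.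
  by rewrite seriesEnat; apply: nondecreasing_series => k _ _; exact: a_ge0.
by exists C => _ [k _ <-]; rewrite seriesEord; exact: aC.
Qed.

Lemma telescope_le (R : numDomainType) (M r : nat -> R) :
  (forall k, M k.+1 + r k <= M k) -> forall K, M K + \sum_(k < K) r k <= M 0%N.
Proof.
move=> Mr; elim=> [|K IH]; first by rewrite big_ord0 addr0.
rewrite big_ord_recr /=; apply: le_trans IH.
by rewrite addrCA [M K + _]addrC lerD2l Mr.
Qed.

Lemma ler_wsum_supp (R : numDomainType) (I : finType) (w F G : I -> R) :
  (forall i, 0 <= w i) -> (forall i, 0 < w i -> F i <= G i) ->
  \sum_i w i * F i <= \sum_i w i * G i.
Proof.
move=> w_ge0 FG; apply: ler_sum => i _.
have := w_ge0 i; rewrite le_eqVlt => /predU1P[<-|w_gt0]; first by rewrite !mul0r.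
by rewrite ler_wpM2l ?FG ?ltW.
Qed.

Lemma eq_wsum_supp (R : numDomainType) (I : finType) (w F G : I -> R) :
  (forall i, 0 <= w i) -> (forall i, 0 < w i -> F i = G i) ->
  \sum_i w i * F i = \sum_i w i * G i.
Proof.
move=> w_ge0 FG; apply/eqP; rewrite eq_le.
by rewrite !ler_wsum_supp // => i /FG ->.
Qed.

Section TupleSums.
Context {T : finType} {R : nmodType}.

Lemma sum_tuple0 (F : seq T -> R) : \sum_(t : 0.-tuple T) F t = F [::].
Proof. by rewrite (big_pred1 [tuple]) // => t; apply/esym/eqP; exact: tuple0. Qed.

Lemma sum_tupleS k (F : seq T -> R) :
  \sum_(t : k.+1.-tuple T) F t = \sum_(b : T) \sum_(s : k.-tuple T) F (b :: s).
Proof.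
rewrite pair_big (reindex (fun p : T * k.-tuple T => [tuple of p.1 :: p.2])) //=.
exists (fun t : k.+1.-tuple T => (thead t, [tuple of behead t])).
  by move=> [b s] _; congr pair; apply: val_inj.
by move=> [[|a s] ?] _; apply: val_inj.
Qed.

Lemma sum_tuple_rev k (F : seq T -> R) :
  \sum_(t : k.-tuple T) F t = \sum_(t : k.-tuple T) F (rev t).
Proof.
rewrite (reindex (fun t : k.-tuple T => [tuple of rev t])) //.
exists (fun t : k.-tuple T => [tuple of rev t]) => t _;
  by apply: val_inj; rewrite /= revK.
Qed.

Lemma sum_tupleSr k (F : seq T -> R) :
  \sum_(t : k.+1.-tuple T) F t = \sum_(s : k.-tuple T) \sum_(b : T) F (rcons s b).
Proof.
rewrite sum_tuple_rev (sum_tupleS _ (fun t => F (rev t))) exchange_big.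
rewrite [RHS](sum_tuple_rev _ (fun s => \sum_(b : T) F (rcons s b))).
by apply: eq_bigr => s _; apply: eq_bigr => b _; rewrite rev_cons.
Qed.

End TupleSums.

Section PathExpectation.
Variables (R : realType) (nu : nat) (P : 'M[R]_nu).
Local Notation mode := 'I_nu.

Definition pexpect (a : mode) (k : nat) (F : seq mode -> R) : R :=
  \sum_(t : k.-tuple mode) pprob P a t * F t.

Lemma pprob_rcons a s b : pprob P a (rcons s b) = pprob P a s * P (last a s) b.
Proof. by elim: s a => [|c s IH] a /=; rewrite ?mul1r ?mulr1 // IH mulrA. Qed.

Lemma pexpect0 a F : pexpect a 0 F = F [::].
Proof. by rewrite /pexpect (sum_tuple0 (fun t => pprob P a t * F t)) mul1r. Qed.

Lemma pexpectS a k F :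
  pexpect a k.+1 F = \sum_b P a b * pexpect b k (fun s => F (b :: s)).
Proof.
rewrite /pexpect (sum_tupleS _ (fun t => pprob P a t * F t)).
by apply: eq_bigr => b _; rewrite mulr_sumr; apply: eq_bigr => s _; rewrite mulrA.
Qed.

Lemma pexpectSr a k F :
  pexpect a k.+1 F = pexpect a k (fun s => \sum_b P (last a s) b * F (rcons s b)).
Proof.
rewrite /pexpect (sum_tupleSr _ (fun t => pprob P a t * F t)).
apply: eq_bigr => s _; rewrite mulr_sumr.
by apply: eq_bigr => b _; rewrite pprob_rcons mulrA.
Qed.

Lemma pexpectD a k F G :
  pexpect a k (fun t => F t + G t) = pexpect a k F + pexpect a k G.
Proof. by rewrite /pexpect -big_split; apply: eq_bigr => t _; rewrite mulrDr. Qed.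

Lemma pexpectB a k F G :
  pexpect a k (fun t => F t - G t) = pexpect a k F - pexpect a k G.
Proof. by rewrite /pexpect -sumrB; apply: eq_bigr => t _; rewrite mulrBr. Qed.

Lemma pexpectZ a k c F : pexpect a k (fun t => c * F t) = c * pexpect a k F.
Proof. by rewrite /pexpect mulr_sumr; apply: eq_bigr => t _; rewrite mulrCA. Qed.

Hypothesis P_stoch : stochastic P.

Lemma pprob_ge0 a s : 0 <= pprob P a s.
Proof. by elim: s a => [|b s IH] a //=; rewrite mulr_ge0 ?(proj1 P_stoch). Qed.

Lemma pprob_rcons_gt0 a s b :
  0 < pprob P a (rcons s b) -> 0 < pprob P a s /\ 0 < P (last a s) b.
Proof.
rewrite pprob_rcons => pr_gt0.
have ps_gt0 : 0 < pprob P a s.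
  rewrite lt_def pprob_ge0 andbT.
  by apply: contraTneq pr_gt0 => ->; rewrite mul0r ltxx.
by split; last by rewrite -(pmulr_rgt0 _ ps_gt0).
Qed.

Lemma pexpect_le a k (F G : seq mode -> R) :
  (forall t : k.-tuple mode, 0 < pprob P a t -> F t <= G t) ->
  pexpect a k F <= pexpect a k G.
Proof. by move=> FG; apply: ler_wsum_supp => t; [exact: pprob_ge0|exact: FG]. Qed.

Lemma eq_pexpect a k (F G : seq mode -> R) :
  (forall t : k.-tuple mode, 0 < pprob P a t -> F t = G t) ->
  pexpect a k F = pexpect a k G.
Proof. by move=> FG; apply: eq_wsum_supp => t; [exact: pprob_ge0|exact: FG]. Qed.

Lemma pexpect_ge0 a k (F : seq mode -> R) :
  (forall t, 0 <= F t) -> 0 <= pexpect a k F.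
Proof. by move=> F_ge0; apply: sumr_ge0 => t _; rewrite mulr_ge0 ?pprob_ge0. Qed.

Lemma pexpect1 a k : pexpect a k (fun=> 1) = 1.
Proof.
elim: k a => [|k IH] a; first by rewrite pexpect0.
by rewrite pexpectS -[RHS](proj2 P_stoch a); apply: eq_bigr => b _; rewrite IH mulr1.
Qed.

Lemma pexpect_cst a k c : pexpect a k (fun=> c) = c.
Proof. by rewrite -[c in RHS]mulr1 -(pexpect1 a k) -pexpectZ mulr1. Qed.

End PathExpectation.

Section Trajectories.
Variables (R : realType) (n m nu : nat).
Variable f : 'rV[R]_n -> 'rV[R]_m -> 'I_nu -> 'rV[R]_n.

Lemma run_rcons (pi : policy R m nu) past x s a :
  run f pi past x (rcons s a) =
  f (run f pi past x s) (pi (rcons (past ++ s) a)) a.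
Proof. by elim: s past x => [|c s IH] past x /=; rewrite ?cats0 // IH cat_rcons. Qed.

Lemma run_cons_xk (pi : policy R m nu) x th s :
  run f pi [::] x (th :: s) = f (xk f pi x th s) (uk pi th s) (thk th s).
Proof. by rewrite (lastI th s) run_rcons -lastI. Qed.

Lemma xk_rcons (pi : policy R m nu) x th s b :
  xk f pi x th (rcons s b) = f (xk f pi x th s) (uk pi th s) (thk th s).
Proof. by rewrite {1}/xk belast_rcons run_cons_xk. Qed.

Lemma run_shift (pi pi' : policy R m nu) th N past x s :
  (forall h, (size h < N)%N -> pi' h = pi (th :: h)) ->
  (size past + size s < N)%N ->
  run f pi' past x s = run f pi (th :: past) x s.
Proof.
move=> pi'E; elim: s past x => [|c s IH] past x //= sN.
rewrite pi'E; last by rewrite size_rcons; lia.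
by rewrite IH // size_rcons addSn -addnS.
Qed.

Lemma clrun_rcons kappa x s a :
  clrun f kappa x (rcons s a) =
  f (clrun f kappa x s) (kappa (clrun f kappa x s) a) a.
Proof. by elim: s x => [|c s IH] x //=. Qed.

End Trajectories.

Section FiniteHorizon.
Variables (R : realType) (n m nu : nat) (P : 'M[R]_nu).
Variable f : 'rV[R]_n -> 'rV[R]_m -> 'I_nu -> 'rV[R]_n.
Variable l : 'rV[R]_n -> 'rV[R]_m -> 'I_nu -> R.
Variable Y : 'I_nu -> set ('rV[R]_n * 'rV[R]_m).
Variable ls : R.
Hypothesis P_stoch : stochastic P.
Local Notation mode := 'I_nu.
Local Notation policy := (policy R m nu).

Definition stage_cost (pi : policy) x th (t : seq mode) : R :=
  l (xk f pi x th t) (uk pi th t) (thk th t).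

Lemma costE N pi x th :
  cost P f l N pi x th = \sum_(k < N) pexpect P th k (stage_cost pi x th).
Proof. by []. Qed.

Lemma feasible_xk_terminal N pi x th (t : seq mode) : (0 < N)%N ->
  feasible P f Y N pi x th -> size t = N -> 0 < pprob P th t ->
  xk f pi x th t = 0.
Proof.
move=> N_gt0 [_ term].
case/lastP: t => [/esym N0|s b]; first by rewrite N0 in N_gt0.
rewrite size_rcons => sN /(pprob_rcons_gt0 P_stoch) [ps_gt0 _].
have s_tuple : size s == N.-1 by rewrite -sN.
by rewrite /xk belast_rcons; exact: (term (Tuple s_tuple)).
Qed.

(* The shifted candidate: drop the first stage and apply the steady-state
   input u_s = 0 at the last one. *)
Definition pshift (pi : policy) th N : policy :=
  fun h => if (size h < N)%N then pi (th :: h) else 0.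

Lemma xk_pshift N pi x th j (t : seq mode) : (size t < N)%N ->
  xk f (pshift pi th N) (f x (pi [:: th]) th) j t = xk f pi x th (j :: t).
Proof.
move=> tN; rewrite /xk (@run_shift _ _ _ _ f pi _ th N) ?size_belast // => h hN.
by rewrite /pshift hN.
Qed.

Hypothesis eq0 : forall i, Y i (0, 0) /\ f 0 0 i = 0.

Lemma pshift_feasible N pi x th j : (0 < N)%N ->
  feasible P f Y N pi x th -> 0 < P th j ->
  feasible P f Y N (pshift pi th N) (f x (pi [:: th]) th) j.
Proof.
move=> N_gt0 feas Pj.
have pprob_cons t : 0 < pprob P j t -> 0 < pprob P th (j :: t).
  by move=> pt; rewrite /= mulr_gt0.
split=> [k t kN /pprob_cons pt|t /pprob_cons pt].
  rewrite xk_pshift ?size_tuple // /uk /pshift /= size_tuple.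
  have [kN'|Nk] := ltnP k.+1 N.
    exact: (proj1 feas k.+1 [tuple of j :: t]).
  have sN : size (j :: t) = N by rewrite /= size_tuple; lia.
  by rewrite (feasible_xk_terminal N_gt0 feas sN pt); exact: (proj1 (eq0 _)).
have tN : (size t < N)%N by rewrite size_tuple prednK.
have sN : size (j :: t) = N by rewrite /= size_tuple prednK.
rewrite run_cons_xk xk_pshift // (feasible_xk_terminal N_gt0 feas sN pt).
by rewrite /uk /pshift /= size_tuple prednK // ltnn (proj2 (eq0 _)).
Qed.

Hypothesis l00 : forall i, l 0 0 i = ls.

Lemma cost_recl N pi x th :
  cost P f l N.+1 pi x th = l x (pi [:: th]) th +
    \sum_j P th j *
      \sum_(k < N) pexpect P j k (fun s => stage_cost pi x th (j :: s)).
Proof.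
rewrite costE big_ord_recl pexpect0; congr (_ + _).
under eq_bigr => k _ do rewrite lift0 pexpectS.
by rewrite exchange_big; apply: eq_bigr => j _; rewrite mulr_sumr.
Qed.

Lemma cost_pshift N pi x th j :
  feasible P f Y N.+1 pi x th -> 0 < P th j ->
  cost P f l N.+1 (pshift pi th N.+1) (f x (pi [:: th]) th) j =
  \sum_(k < N) pexpect P j k (fun s => stage_cost pi x th (j :: s)) + ls.
Proof.
move=> feas Pj; rewrite costE big_ord_recr /=; congr (_ + _).
  apply: eq_bigr => k _; apply: eq_bigr => t _; congr (_ * _).
  rewrite /stage_cost xk_pshift; last by rewrite size_tuple ltnS ltnW.
  by rewrite /uk /pshift /= size_tuple ltnS ltn_ord.
rewrite -[RHS](pexpect_cst P_stoch j N ls).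
apply: (eq_pexpect P_stoch) => t pt.
have pt' : 0 < pprob P th (j :: t) by rewrite /= mulr_gt0.
rewrite /stage_cost xk_pshift ?size_tuple //.
rewrite (feasible_xk_terminal _ feas _ pt') ?size_tuple //.
by rewrite /uk /pshift /= size_tuple ltnn l00.
Qed.

Lemma pshift_cost_expect N pi x th : (0 < N)%N -> feasible P f Y N pi x th ->
  \sum_j P th j * cost P f l N (pshift pi th N) (f x (pi [:: th]) th) j =
  cost P f l N pi x th - l x (pi [:: th]) th + ls.
Proof.
case: N => // N _ feas.
rewrite cost_recl.
rewrite (eq_wsum_supp (proj1 P_stoch th) (fun j Pj => cost_pshift feas Pj)).
under eq_bigr do rewrite mulrDr.
rewrite big_split /= -mulr_suml (proj2 P_stoch th) mul1r; lra.
Qed.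

Variables (lam rho : 'rV[R]_n -> 'I_nu -> R) (lams : R).
Hypothesis lam0 : forall i, lam 0 i = lams.
Hypothesis rho_ge0 : forall x i, 0 <= rho x i.
Hypothesis diss : forall x u i,
  \sum_(j < nu) P i j * lam (f x u i) j - lam x i <= l x u i - ls - rho x i.

Lemma cost_ge_storage N pi x th : (0 < N)%N -> feasible P f Y N pi x th ->
  N%:R * ls + lams - lam x th <= cost P f l N pi x th.
Proof.
move=> N_gt0 feas.
pose D k := pexpect P th k (fun t => lam (xk f pi x th t) (thk th t)).
have D_step k : D k.+1 + (ls - pexpect P th k (stage_cost pi x th)) <= D k.
  rewrite /D pexpectSr -(pexpect_cst P_stoch th k ls) -pexpectB -pexpectD.
  apply: (pexpect_le P_stoch) => s _.
  under eq_bigr do rewrite xk_rcons /thk last_rcons.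
  have := diss (xk f pi x th s) (uk pi th s) (last th s).
  have := rho_ge0 (xk f pi x th s) (last th s).
  rewrite /stage_cost /thk; lra.
have D0 : D 0%N = lam x th by rewrite /D pexpect0.
have DN : D N = lams.
  rewrite /D -(pexpect_cst P_stoch th N lams).
  apply: (eq_pexpect P_stoch) => t pt.
  by rewrite (feasible_xk_terminal N_gt0 feas _ pt) ?size_tuple ?lam0.
have := telescope_le D_step N.
rewrite D0 DN sumrB sumr_const card_ord -mulr_natl costE; lra.
Qed.

End FiniteHorizon.

Section ClosedLoop.
Variables (R : realType) (n m nu N : nat) (P : 'M[R]_nu).
Variable f : 'rV[R]_n -> 'rV[R]_m -> 'I_nu -> 'rV[R]_n.
Variable l : 'rV[R]_n -> 'rV[R]_m -> 'I_nu -> R.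
Variable Y : 'I_nu -> set ('rV[R]_n * 'rV[R]_m).
Variables (ls lams : R) (lam rho : 'rV[R]_n -> 'I_nu -> R).
Variable kappa : 'rV[R]_n -> 'I_nu -> 'rV[R]_m.
Variable piF : 'rV[R]_n -> 'I_nu -> policy R m nu.
Hypothesis N_gt0 : (0 < N)%N.
Hypothesis P_stoch : stochastic P.
Hypothesis eq0 : forall i, Y i (0, 0) /\ f 0 0 i = 0.
Hypothesis l00 : forall i, l 0 0 i = ls.
Hypothesis lam0 : forall i, lam 0 i = lams.
Hypothesis rho_ge0 : forall x i, 0 <= rho x i.
Hypothesis diss : forall x u i,
  \sum_(j < nu) P i j * lam (f x u i) j - lam x i <= l x u i - ls - rho x i.
Hypothesis piF_opt : forall x th, XN P f Y N x th ->
  optimal P f Y l N (piF x th) x th /\ piF x th [:: th] = kappa x th.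
Local Notation XN := (XN P f Y N).

Definition lyap x th := cost P f l N (piF x th) x th + lam x th.

Lemma lyap_ge x th : XN x th -> N%:R * ls + lams <= lyap x th.
Proof.
move=> /piF_opt [[feas _] _].
have := cost_ge_storage P_stoch lam0 rho_ge0 diss N_gt0 feas; rewrite /lyap; lra.
Qed.

Lemma XN_recursive x th j : XN x th -> 0 < P th j -> XN (f x (kappa x th) th) j.
Proof.
move=> /piF_opt [[feas _] <-] Pj.
by exists (pshift (piF x th) th N); exact: pshift_feasible.
Qed.

Lemma lyap_decrease x th : XN x th ->
  \sum_j P th j * lyap (f x (kappa x th) th) j <= lyap x th - rho x th.
Proof.
move=> /piF_opt [[feas _] <-]; set x' := f x (piF x th [:: th]) th.
have value_le : \sum_j P th j * cost P f l N (piF x' j) x' j <=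
    cost P f l N (piF x th) x th - l x (piF x th [:: th]) th + ls.
  rewrite -(pshift_cost_expect P_stoch l00 N_gt0 feas).
  apply: (ler_wsum_supp (proj1 P_stoch th)) => j Pj.
  have feas' := pshift_feasible P_stoch eq0 N_gt0 feas Pj.
  have Xj : XN x' j by exists (pshift (piF x th) th N).
  by have [[_ opt'] _] := piF_opt Xj; exact: opt'.
rewrite /lyap; under eq_bigr do rewrite mulrDr.
rewrite big_split /=; have := diss x (piF x th [:: th]) th; rewrite -/x'; lra.
Qed.

Variables (x0 : 'rV[R]_n) (th0 : 'I_nu).
Hypothesis X0 : XN x0 th0.

Definition xcl (t : seq 'I_nu) := clrun f kappa x0 (belast th0 t).

Lemma xcl_rcons s b :
  xcl (rcons s b) = f (xcl s) (kappa (xcl s) (thk th0 s)) (thk th0 s).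
Proof. by rewrite /xcl belast_rcons (lastI th0 s) clrun_rcons. Qed.

Lemma XN_xcl t : 0 < pprob P th0 t -> XN (xcl t) (thk th0 t).
Proof.
elim/last_ind: t => [|s b IH] // /(pprob_rcons_gt0 P_stoch) [ps_gt0 Pb].
by rewrite xcl_rcons /thk last_rcons; exact: XN_recursive (IH ps_gt0) Pb.
Qed.

Lemma pexpect_lyap_decrease k :
  pexpect P th0 k.+1 (fun t => lyap (xcl t) (thk th0 t)) +
  pexpect P th0 k (fun t => rho (xcl t) (thk th0 t)) <=
  pexpect P th0 k (fun t => lyap (xcl t) (thk th0 t)).
Proof.
rewrite pexpectSr -pexpectD; apply: (pexpect_le P_stoch) => s /XN_xcl Xs.
under eq_bigr do rewrite xcl_rcons /thk last_rcons.
have := lyap_decrease Xs; rewrite /thk; lra.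
Qed.

Lemma sum_pexpect_rho_le K :
  \sum_(k < K) pexpect P th0 k (fun t => rho (xcl t) (thk th0 t)) <=
  lyap x0 th0 - (N%:R * ls + lams).
Proof.
have lyap_lb :
    N%:R * ls + lams <= pexpect P th0 K (fun t => lyap (xcl t) (thk th0 t)).
  rewrite -(pexpect_cst P_stoch th0 K (N%:R * ls + lams)).
  by apply: (pexpect_le P_stoch) => t /XN_xcl; exact: lyap_ge.
have := telescope_le pexpect_lyap_decrease K; rewrite pexpect0; lra.
Qed.

Variable gamma : R.
Hypothesis gamma_gt0 : 0 < gamma.
Hypothesis rho_quad : forall x i, gamma * sqnorm x <= rho x i.

Lemma msqE k :
  msq P f kappa x0 th0 k = pexpect P th0 k (fun t => sqnorm (xcl t)).
Proof. by []. Qed.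

Lemma msq_cvg0 : msq P f kappa x0 th0 @ \oo --> 0.
Proof.
apply: (@cvg0_bounded_series _ _ ((lyap x0 th0 - (N%:R * ls + lams)) / gamma)).
  move=> k; rewrite msqE; apply: (pexpect_ge0 P_stoch) => t.
  by apply: sumr_ge0 => i _; exact: sqr_ge0.
move=> K; rewrite ler_pdivlMr // mulrC mulr_sumr.
apply: le_trans (sum_pexpect_rho_le K); apply: ler_sum => k _.
by rewrite msqE -pexpectZ; apply: (pexpect_le P_stoch) => t _; exact: rho_quad.
Qed.

End ClosedLoop.

Theorem theorem2 (R : realType) (n m nu N : nat)
  (P : 'M[R]_nu)
  (f : 'rV[R]_n -> 'rV[R]_m -> 'I_nu -> 'rV[R]_n)
  (l : 'rV[R]_n -> 'rV[R]_m -> 'I_nu -> R)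
  (Y : 'I_nu -> set ('rV[R]_n * 'rV[R]_m))
  (ls : R)
  (lam : 'rV[R]_n -> 'I_nu -> R) (lams : R)
  (rho : 'rV[R]_n -> 'I_nu -> R)
  (gamma : R)
  (kappa : 'rV[R]_n -> 'I_nu -> 'rV[R]_m) :
  (0 < N)%N ->
  (* well-posedness *)
  (forall x u i, 0 <= l x u i) ->
  (forall i, lower_semicontinuous
               (fun p : 'rV[R]_n * 'rV[R]_m => (l p.1 p.2 i)%:E)) ->
  (forall i, level_bounded_loc_unif (fun x u => l x u i)) ->
  (forall i, continuous (fun p : 'rV[R]_n * 'rV[R]_m => f p.1 p.2 i)) ->
  (forall i, Y i !=set0 /\ compact (Y i)) ->
  stochastic P -> irreducible P -> aperiodic P ->
  (* common optimal equilibrium (x_s, u_s) = (0, 0) with cost ls *)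
  (forall i, Y i (0, 0) /\ f 0 0 i = 0 /\
     (forall x u, f x u i = x -> Y i (x, u) -> l 0 0 i <= l x u i)) ->
  (forall i, l 0 0 i = ls) ->
  (* controllability *)
  (forall i j : 'I_nu, exists u, Y j (0, u) /\ f 0 u j = 0) ->
  (* strict stochastic dissipativity *)
  (forall i, lower_semicontinuous (fun x : 'rV[R]_n => (lam x i)%:E)) ->
  (forall i, lam 0 i = lams) ->
  (forall x i, 0 <= rho x i) ->
  (forall i, convex_state (fun x => rho x i)) ->
  (forall i, rho 0 i = 0 /\ forall x, x != 0 -> 0 < rho x i) ->
  (forall x u i,
     \sum_(j < nu) P i j * lam (f x u i) j - lam x i
       <= l x u i - ls - rho x i) ->
  (* quadratic lower bound on rho *)
  0 < gamma ->
  (forall x i, gamma * sqnorm x <= rho x i) ->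
  (* kappa_N: first element of an optimal policy of P(x, theta) *)
  (forall x th, XN P f Y N x th ->
     exists pi, optimal P f Y l N pi x th /\ pi [:: th] = kappa x th) ->
  (* mean square stability *)
  forall x0 th0, XN P f Y N x0 th0 ->
    msq P f kappa x0 th0 @ \oo --> (0 : R).
Proof.
(* Well-posedness and controllability serve in the paper only to guarantee
   that optimal policies exist, which the hypothesis on kappa provides. *)
move=> N_gt0 _ _ _ _ _ P_stoch _ _ equil l00 _ _ lam0 rho_ge0 _ _ diss
  gamma_gt0 rho_quad kappa_opt x0 th0 X0.
have eq0 i : Y i (0, 0) /\ f 0 0 i = 0 by have [? []] := equil i.
have /choice [piF piF_opt] : forall p : 'rV[R]_n * 'I_nu,
    exists pi : policy R m nu, XN P f Y N p.1 p.2 ->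
      optimal P f Y l N pi p.1 p.2 /\ pi [:: p.2] = kappa p.1 p.2.
  move=> [x th] /=; have [/kappa_opt [pi pi_opt]|nX] := pselect (XN P f Y N x th).
    by exists pi.
  by exists (fun=> 0) => /nX.
have piF_opt' x th := piF_opt (x, th).
exact: (msq_cvg0 N_gt0 P_stoch eq0 l00 lam0 rho_ge0 diss piF_opt' X0
  gamma_gt0 rho_quad).
Qed.
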